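(* Assume $2c<\gamma<a-c$ and additionally $\gamma>\frac a2+c$. Then the unique maximizer $p^*_\gamma$ of $r_\gamma$ on $[0,a/b]$ (the unique zero of $r_\gamma'$ in $(0,a/b)$) equals $\frac{a}{2b}$. Moreover, let $\alpha,\beta\ge0$ and let $\hat a,\hat b$ be real numbers with $\hat b\ge b_{\min}$, $|\hat a-a|\le\alpha$, $|\hat b-b|\le\beta$ and $\frac{\hat a}{2\hat b}\in[0,a/b]$. Then $$r_\gamma\Bigl(\frac a{2b}\Bigr)-r_\gamma\Bigl(\frac{\hat a}{2\hat b}\Bigr)\le 2C_s\Bigl(\frac{a_{\max}^2\beta^2}{4b_{\min}^4}+\frac{\alpha^2}{4b_{\min}^2}\Bigr),$$ where $C_s:=\frac{2b+abL_F}{2}$.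
   Context: Let $a,b,c,L_F>0$ and constants $a_{\max},b_{\min}>0$ with $a\le a_{\max}$, $b\ge b_{\min}$. Let $N$ be a real random variable taking values in $[-c,c]$ with $\mathbb{E}[N]=0$, whose cumulative distribution function $F$ is $L_F$-Lipschitz. For an inventory level $\gamma$ and price $p\ge0$, the expected revenue is $r_\gamma(p):=p\cdot\mathbb{E}_N\bigl[\min\{\gamma,\,a-bp+N\}\bigr]$, and $r_\gamma'$ denotes its derivative in $p$. *)

From mathcomp Require Import all_boot all_order all_algebra.
From mathcomp Require Import all_classical all_reals all_analysis.
Set Implicit Arguments. Unset Strict Implicit. Unset Printing Implicit Defensive.
Import Order.TTheory GRing.Theory Num.Theory.
Local Open Scope ring_scope.

Definition revenue d (T : measurableType d) (R : realType) (P : probability T R)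
  (N : {RV P >-> R}) (a b gamma p : R) : R :=
  p * fine ('E_P[fun t => (Num.min gamma (a - b * p + N t))%R])%E.

Definition cdfR d (T : measurableType d) (R : realType) (P : probability T R)
  (N : {RV P >-> R}) (x : R) : R := fine (cdf N x).

From mathcomp Require Import all_boot all_order all_algebra.
From mathcomp Require Import all_classical all_reals all_analysis.
From mathcomp Require Import ring lra.
Import Order.TTheory GRing.Theory Num.Theory.
Local Open Scope classical_set_scope.
Local Open Scope ring_scope.

(* Write k := a - b p for the mean demand at price p and u := c - (gamma - k)
   for the amount by which demand can exceed the inventory.  Since N is
   centred and bounded by c, E[min(gamma, k + N)] is at most k, equals k when
   u <= 0, and otherwise loses at most u (1 - F(gamma - k)) <= L_F u^2.  Hence
   r is squeezed between the riskless revenue p (a - b p), a concave parabola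
   with vertex a/(2b), and that parabola minus p L_F u^2.  As gamma > a/2 + c,
   the vertex is riskless and u <= b (a/(2b) - p) below it, so r(a/(2b)) - r(p)
   lies between b (p - a/(2b))^2 and C_s (p - a/(2b))^2.  The estimation bound
   then reduces to the squared error of the plug-in price ahat/(2 bhat), which
   splits into an a-part and a b-part. *)

Lemma parabola_vertex_gap {R : numFieldType} (a b p : R) : b != 0 ->
  a / (2 * b) * (a - b * (a / (2 * b))) - p * (a - b * p) =
  b * (p - a / (2 * b)) ^+ 2.
Proof. by move=> b0; field. Qed.

Section real_expectation.
Context d (T : measurableType d) (R : realType) (P : probability T R).

Lemma bounded_Lfun1 (f : T -> R) (B : R) : measurable_fun setT f ->
  (forall x, `|f x| <= B) -> f \in Lfun P 1.
Proof.
move=> mf fB; apply/Lfun1_integrable.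
apply: measurable_bounded_integrable => //.
  by apply: le_lt_trans (probability_le1 P measurableT) _; rewrite ltry.
exists B; split; first exact: num_real.
by move=> M /ltW BM x _ /=; exact: le_trans (fB x) BM.
Qed.

Definition expectR (f : T -> R) : R := fine ('E_P[f])%E.

Lemma expectRD f g : f \in Lfun P 1 -> g \in Lfun P 1 ->
  expectR (f \+ g) = expectR f + expectR g.
Proof.
move=> lf lg; rewrite /expectR expectationD // fineD //.
all: exact: expectation_fin_num.
Qed.

Lemma expectR_cst k : expectR (cst k) = k.
Proof. by rewrite /expectR expectation_cst. Qed.

Lemma expectRZ f k : f \in Lfun P 1 -> expectR (k \o* f) = k * expectR f.
Proof.
move=> lf; rewrite /expectR expectationZl //.
by have := expectation_fin_num lf; case: ('E_P[f])%E.
Qed.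

Lemma expectR_indic A : measurable A -> expectR (\1_A) = fine (P A).
Proof. by move=> mA; rewrite /expectR expectation_indic. Qed.

Lemma ler_expectR f g : f \in Lfun P 1 -> g \in Lfun P 1 ->
  (forall x, f x <= g x) -> expectR f <= expectR g.
Proof.
move=> lf lg fg; apply: fine_le; try exact: expectation_fin_num.
rewrite !unlock; apply: le_integral => //; try exact/Lfun1_integrable.
by move=> x _; rewrite lee_fin.
Qed.

Lemma cdfRE (N : {RV P >-> R}) t : cdfR N t = fine (P [set x | N x <= t]).
Proof. by rewrite /cdfR /cdf /distribution /pushforward; congr (fine (P _)). Qed.

End real_expectation.
Arguments bounded_Lfun1 {d T R P f} B.
Arguments expectR {d T R} P f.

Section newsvendor.
Context d (T : measurableType d) (R : realType) (P : probability T R).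
Variables (N : {RV P >-> R}) (c : R).
Hypothesis N_bounded : forall t, -c <= N t <= c.
Hypothesis N_centred : ('E_P[N] = 0)%E.

Lemma measurable_shift k : measurable_fun setT (fun x => k + N x).
Proof. exact: measurable_realfun.measurable_funD. Qed.

Lemma Lfun1_shift k : (fun x => k + N x) \in Lfun P 1.
Proof.
apply: (bounded_Lfun1 (`|k| + c) (measurable_shift k)) => x.
by apply: le_trans (ler_normD _ _) _; rewrite lerD2l ler_norml.
Qed.

Lemma expectR_shift k : expectR P (fun x => k + N x) = k.
Proof.
have lN : (N : T -> R) \in Lfun P 1.
  apply: (bounded_Lfun1 c) => [|x]; [exact: measurable_funP | by rewrite ler_norml].
rewrite (_ : (fun x => k + N x) = cst k \+ N) // expectRD ?expectR_cst //.
  by rewrite /expectR N_centred addr0.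
exact: Lfun_cst.
Qed.

Lemma cdfR_bound : cdfR N c = 1.
Proof.
rewrite cdfRE (_ : [set x | N x <= c] = setT) ?probability_setT //.
by apply/seteqP; split => x //= _; case/andP: (N_bounded x).
Qed.

Variable gamma : R.

Definition sales k : T -> R := fun t => Num.min gamma (k + N t).

Lemma Lfun1_sales k : sales k \in Lfun P 1.
Proof.
apply: (bounded_Lfun1 (`|gamma| + (`|k| + c))).
  exact: measurable_realfun.measurable_minr (measurable_cst gamma) (measurable_shift k).
move=> x; have /andP[Nlo Nhi] := N_bounded x.
have hN : `|N x| <= c by rewrite ler_norml Nlo Nhi.
have := normr_ge0 k; have := normr_ge0 gamma.
rewrite /sales minEle; case: ifP => _; first lra.
by have := ler_normD k (N x); lra.
Qed.

Lemma expectR_sales_le k : expectR P (sales k) <= k.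
Proof.
rewrite -{2}(expectR_shift k).
apply: ler_expectR; [exact: Lfun1_sales | exact: Lfun1_shift |].
by move=> x; rewrite ge_min lexx orbT.
Qed.

Lemma expectR_sales_riskless k : k + c <= gamma -> expectR P (sales k) = k.
Proof.
move=> kc; rewrite -{2}(expectR_shift k); congr (expectR P _); apply/funext => x.
by have /andP[_ Nhi] := N_bounded x; rewrite /sales minEle; case: leP => //; lra.
Qed.

(* With t := gamma - k and u := c - t, the minorant (k - u) + N + u 1_{N <= t}
   has expectation k - u (1 - F t). *)
Lemma expectR_sales_ge k : gamma - k <= c ->
  k - (c - (gamma - k)) * (1 - cdfR N (gamma - k)) <= expectR P (sales k).
Proof.
set t := gamma - k; set u := c - t; move=> tc.
set A := [set x | N x <= t].
have mA : measurable A.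
  have := measurable_fun_le measurableT (measurable_funP N) (measurable_cst t).
  by rewrite setTI.
have m1A : measurable_fun setT (\1_A : T -> R).
  exact: measurable_realfun.measurable_indic.
have l1A : (u \o* \1_A : T -> R) \in Lfun P 1.
  apply: (bounded_Lfun1 `|u|).
    exact: measurable_realfun.measurable_funM m1A (measurable_cst u).
  move=> x /=; rewrite indicE normrM.
  by case: (x \in A); rewrite ?normr1 ?normr0 ?mul1r ?mul0r.
have -> : k - u * (1 - cdfR N t) =
          expectR P ((fun x => (k - u) + N x) \+ (u \o* \1_A)).
  rewrite expectRD ?expectR_shift ?expectRZ ?expectR_indic -?cdfRE ?Lfun1_shift //.
    by ring.
  apply: (bounded_Lfun1 1 m1A) => x.
  by rewrite indicE; case: (x \in A); rewrite ?normr1 ?normr0.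
apply: ler_expectR; [exact: rpredD (Lfun1_shift _) l1A | exact: Lfun1_sales |].
move=> x; have /andP[Nlo Nhi] := N_bounded x; move: tc; rewrite /sales /= /u /t.
rewrite indicE le_min; case: (boolP (x \in A)) => [xA|_] tc.
  by move: xA; rewrite inE /A /t /= => xA; rewrite mul1r; apply/andP; split; lra.
by rewrite mul0r addr0; apply/andP; split; lra.
Qed.

Variable LF : R.
Hypothesis cdf_lipschitz : forall x y, `|cdfR N x - cdfR N y| <= LF * `|x - y|.

Lemma expectR_sales_lipschitz_ge k : gamma - k <= c ->
  k - LF * (c - (gamma - k)) ^+ 2 <= expectR P (sales k).
Proof.
move=> tc; apply: le_trans _ (expectR_sales_ge _ tc).
have u0 : 0 <= c - (gamma - k) by lra.
have tail : 1 - cdfR N (gamma - k) <= LF * (c - (gamma - k)).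
  rewrite -cdfR_bound; apply: le_trans (ler_norm _) _.
  by apply: le_trans (cdf_lipschitz _ _) _; rewrite ger0_norm.
by rewrite expr2 lerD2l lerN2 mulrCA ler_wpM2l.
Qed.

Variables a b : R.
Hypotheses (a_ge0 : 0 <= a) (b_gt0 : 0 < b) (LF_ge0 : 0 <= LF).
Hypothesis vertex_riskless : a / 2 + c <= gamma.

Local Notation r := (revenue N a b gamma).
Local Notation pv := (a / (2 * b)).

Lemma revenueE (p : R) : r p = p * expectR P (sales (a - b * p)).
Proof. by []. Qed.

Lemma revenue_le_riskless (p : R) : 0 <= p -> r p <= p * (a - b * p).
Proof. by move=> p0; rewrite revenueE ler_wpM2l // expectR_sales_le. Qed.

Lemma revenue_vertex : r pv = pv * (a - b * pv).
Proof.
have half : a - b * pv = a / 2 by field; exact: lt0r_neq0.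
by rewrite revenueE half expectR_sales_riskless.
Qed.

Lemma revenue_gap_ge (p : R) : 0 <= p -> b * (p - pv) ^+ 2 <= r pv - r p.
Proof.
move=> p0; rewrite revenue_vertex -parabola_vertex_gap ?gt_eqF //.
by rewrite lerD2l lerN2 revenue_le_riskless.
Qed.

Lemma revenue_ge_lipschitz (p : R) : 0 <= p -> gamma - (a - b * p) <= c ->
  p * (a - b * p) - p * LF * (c - (gamma - (a - b * p))) ^+ 2 <= r p.
Proof.
move=> p0 tc; rewrite revenueE -mulrA -mulrBr ler_wpM2l //.
exact: expectR_sales_lipschitz_ge.
Qed.

Lemma revenue_gap_le (p : R) : 0 <= p ->
  r pv - r p <= (2 * b + a * b * LF) / 2 * (p - pv) ^+ 2.
Proof.
move=> p0; have gap := parabola_vertex_gap a b p (lt0r_neq0 b_gt0).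
have abLF : 0 <= a * b * LF by rewrite !mulr_ge0 // ltW.
have sq0 := sqr_ge0 (p - pv).
have Cs_split : (2 * b + a * b * LF) / 2 * (p - pv) ^+ 2 =
    b * (p - pv) ^+ 2 + a * b * LF / 2 * (p - pv) ^+ 2.
  by field; exact: lt0r_neq0.
rewrite Cs_split revenue_vertex.
have [riskless|risky] := lerP (a - b * p + c) gamma.
  rewrite revenueE expectR_sales_riskless //.
  by have := mulr_ge0 (divr_ge0 abLF (ler0n _ 2)) sq0; lra.
set u := c - (gamma - (a - b * p)).
have u0 : 0 <= u by rewrite /u; lra.
have u_le : u <= b * (pv - p).
  have -> : b * (pv - p) = a / 2 - b * p by field; exact: lt0r_neq0.
  by move: vertex_riskless; rewrite /u; lra.
have p_le : p <= pv by rewrite -subr_ge0 -(pmulr_rge0 _ b_gt0); lra.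
have loss : p * LF * u ^+ 2 <= a * b * LF / 2 * (p - pv) ^+ 2.
  have -> : a * b * LF / 2 * (p - pv) ^+ 2 = pv * LF * (b * (pv - p)) ^+ 2.
    by field; exact: lt0r_neq0.
  apply: ler_pM; rewrite ?sqr_ge0 ?mulr_ge0 ?ler_wpM2r //.
  by rewrite ler_sqr ?nnegrE //; lra.
have tc : gamma - (a - b * p) <= c by lra.
by have := revenue_ge_lipschitz p p0 tc; rewrite -/u; lra.
Qed.
End newsvendor.

Lemma ler_pdiv {R : numFieldType} (x y w z : R) :
  0 <= x -> x <= y -> 0 < w -> w <= z -> x / z <= y / w.
Proof.
move=> x0 xy w0 wz; have z0 := lt_le_trans w0 wz.
apply: ler_pM => //; first by rewrite invr_ge0 ltW.
by rewrite lef_pV2 // posrE.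
Qed.

Lemma sqr_le_norm {R : realDomainType} {x y : R} : `|x| <= y -> x ^+ 2 <= y ^+ 2.
Proof.
move=> xy; rewrite -(real_normK (num_real x)) ler_sqr // nnegrE //.
exact: le_trans xy.
Qed.

Lemma plugin_price_sqr_error {R : realFieldType} (a b ahat bhat amax bmin alpha beta : R) :
  0 <= a <= amax -> 0 < bmin -> bmin <= b -> bmin <= bhat ->
  `|ahat - a| <= alpha -> `|bhat - b| <= beta ->
  (ahat / (2 * bhat) - a / (2 * b)) ^+ 2 <=
    2 * (amax ^+ 2 * beta ^+ 2 / (4 * bmin ^+ 4) + alpha ^+ 2 / (4 * bmin ^+ 2)).
Proof.
move=> /andP[a0 a_le] bmin0 bmin_b bmin_bhat ea eb.
have b0 := lt_le_trans bmin0 bmin_b; have bhat0 := lt_le_trans bmin0 bmin_bhat.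
set u := (ahat - a) / (2 * bhat); set v := a * (b - bhat) / (2 * b * bhat).
have -> : ahat / (2 * bhat) - a / (2 * b) = u + v.
  by rewrite /u /v; field; rewrite !lt0r_neq0.
have hu : `|u| <= alpha / (2 * bmin).
  rewrite /u normrM normfV (gtr0_norm (mulr_gt0 _ bhat0)) //.
  by apply: ler_pdiv; rewrite ?mulr_gt0 ?ler_wpM2l.
have hv : `|v| <= amax * beta / (2 * bmin ^+ 2).
  rewrite /v normrM normfV normrM (gtr0_norm (mulr_gt0 (mulr_gt0 _ b0) bhat0)) //.
  apply: ler_pdiv; rewrite ?mulr_ge0 ?mulr_gt0 ?exprn_gt0 //.
    by rewrite ger0_norm // ler_pM // distrC.
  by rewrite -mulrA ler_wpM2l // expr2 ler_pM // ltW.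
have -> : 2 * (amax ^+ 2 * beta ^+ 2 / (4 * bmin ^+ 4) + alpha ^+ 2 / (4 * bmin ^+ 2))
        = 2 * ((alpha / (2 * bmin)) ^+ 2 + (amax * beta / (2 * bmin ^+ 2)) ^+ 2).
  by field; rewrite lt0r_neq0.
have := sqr_le_norm hu; have := sqr_le_norm hv; have := sqr_ge0 (u - v).
rewrite sqrrB sqrrD; lra.
Qed.

Theorem mainTheorem4 (R : realType) (d : measure_display) (T : measurableType d)
  (P : probability T R) (N : {RV P >-> R})
  (a b c LF amax bmin gamma : R) :
  0 < a -> 0 < b -> 0 < c -> 0 < LF -> 0 < amax -> 0 < bmin ->
  a <= amax -> bmin <= b ->
  (forall t, -c <= N t <= c) ->
  ('E_P[N] = 0)%E ->
  (forall x y, `|cdfR N x - cdfR N y| <= LF * `|x - y|) ->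
  2 * c < gamma -> gamma < a - c -> a / 2 + c < gamma ->
  let r := revenue N a b gamma in
  let Cs := (2 * b + a * b * LF) / 2 in
  ((0 <= a / (2 * b) <= a / b) /\
   (forall p, 0 <= p <= a / b -> r p <= r (a / (2 * b))) /\
   (forall p, 0 <= p <= a / b -> r p = r (a / (2 * b)) -> p = a / (2 * b))) /\
  (forall alpha beta ahat bhat : R, 0 <= alpha -> 0 <= beta ->
     bmin <= bhat -> `|ahat - a| <= alpha -> `|bhat - b| <= beta ->
     0 <= ahat / (2 * bhat) <= a / b ->
     r (a / (2 * b)) - r (ahat / (2 * bhat)) <=
       2 * Cs * (amax ^+ 2 * beta ^+ 2 / (4 * bmin ^+ 4)
                 + alpha ^+ 2 / (4 * bmin ^+ 2))).
Proof.
move=> a0 b0 _ LF0 _ bmin0 a_amax bmin_b Nb EN F_lip _ _ vertex r Cs.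
set pv := a / (2 * b).
have pv0 : 0 <= pv by rewrite divr_ge0 ?mulr_ge0 ?ltW.
have gap_ge p : 0 <= p -> b * (p - pv) ^+ 2 <= r pv - r p.
  by move=> p0; apply: revenue_gap_ge => //; exact: ltW.
split; [split; [|split]|].
- have half : pv = a / b / 2 by rewrite /pv; field; exact: lt0r_neq0.
  have := divr_ge0 (ltW a0) (ltW b0); rewrite pv0 half; lra.
- move=> p /andP[p0 _]; rewrite -subr_ge0.
  by apply: le_trans (gap_ge p p0); rewrite mulr_ge0 ?sqr_ge0 ?ltW.
- move=> p /andP[p0 _] rp; have := gap_ge p p0.
  rewrite rp subrr pmulr_rle0 // => sq_le0.
  by apply/eqP; rewrite -subr_eq0 -sqrf_eq0 eq_le sq_le0 sqr_ge0.
move=> alpha beta ahat bhat _ _ bmin_bhat ea eb /andP[q0 _].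
have Cs0 : 0 <= Cs by rewrite divr_ge0 ?addr_ge0 ?mulr_ge0 ?ltW.
apply: le_trans (_ : Cs * (ahat / (2 * bhat) - pv) ^+ 2 <= _).
  by apply: revenue_gap_le => //; exact: ltW.
rewrite (mulrC 2 Cs) -[Cs * 2 * _]mulrA; apply: (ler_wpM2l Cs0).
apply: plugin_price_sqr_error => //.
by rewrite ltW.
Qed.
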